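(* Let $b\in\mathbb{Z}^+$. Then $t(3,5,4b;4n+3)=t(3,5,b;n)$ for every $n\in\mathbb{Z}^+$, and for all complex $q$ with $|q|<1$, $$\sum_{n=0}^{\infty}t(3,5,4b;4n+5)q^n=8\psi(q^b)\big(\varphi(q^{10})\psi(q^{12})+q\varphi(q^6)\psi(q^{20})\big).$$
   Context: $\mathbb{Z}^+$ is the set of positive integers. For $a,b,c\in\mathbb{Z}^+$ and nonnegative integer $n$, $t(a,b,c;n)$ denotes the number of triples $(x,y,z)\in\mathbb{Z}^3$ with $n=a\frac{x(x+1)}2+b\frac{y(y+1)}2+c\frac{z(z+1)}2$. Ramanujan's theta functions are $\varphi(q)=\sum_{n=-\infty}^{\infty}q^{n^2}$ and $\psi(q)=\sum_{n=0}^{\infty}q^{n(n+1)/2}$ for $|q|<1$. *)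

From Stdlib Require Import Reals ZArith List Lia.
From Coquelicot Require Import Coquelicot.
Import ListNotations.

Definition tri (x : Z) : Z := (x * (x + 1) / 2)%Z.

(* Integers -n-1, ..., n.  For |x| outside this range tri x > n, so every
   solution of a*tri x + b*tri y + c*tri z = n (a,b,c >= 1) lies in it. *)
Definition zrange (n : nat) : list Z :=
  map (fun k => (Z.of_nat k - Z.of_nat n - 1)%Z) (seq 0 (2 * n + 2)).

Definition t (a b c n : nat) : nat :=
  length (filter (fun p : Z * Z * Z =>
                    let '(x, y, z) := p in
                    Z.eqb (Z.of_nat a * tri x + Z.of_nat b * tri y + Z.of_nat c * tri z)
                          (Z.of_nat n))
                 (list_prod (list_prod (zrange n) (zrange n)) (zrange n))).

Definition Csum (a : nat -> C) : C :=
  (Series (fun n => fst (a n)), Series (fun n => snd (a n))).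

Definition psi (q : C) : C := Csum (fun n => (q ^ (n * (n + 1) / 2))%C).

(* Ramanujan's phi(q) = sum_{n in Z} q^{n^2}, split as n >= 0 and n = -(m+1), m >= 0. *)
Definition phi (q : C) : C :=
  (Csum (fun n => q ^ (n * n)) + Csum (fun m => q ^ ((m + 1) * (m + 1))))%C.

(* Write T x = x (x + 1) / 2.  Grouping the solutions of n = 3 T x + 5 T y + c T z by the value
   of T z turns t(3,5,c b;n) into a convolution of the coefficients of psi(q^b) with
   r(M) = #{(x, y) | 3 T x + 5 T y = M}, and (2x + 1)^2 = 8 T x + 1 identifies r(M) with the number
   of odd solutions of 3u^2 + 5v^2 = 8M + 8.

   The map L(u, v) = (u + 5v, 3u - v) satisfies 3(u + 5v)^2 + 5(3u - v)^2 = 16 (3u^2 + 5v^2) and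
   L(L(u, v)) = 16 (u, v).  For an odd solution, exactly one of (u, v) and (u, -v) lies in the
   residue class where L is divisible by the relevant power of 2 (a finite check modulo 16).  Hence
   L/2 matches half of the odd solutions for 8K with half of those for 32K, which gives
   r(4d + 3) = r(d); and L/16 matches half of the odd solutions for 16M (M odd) with all
   solutions of 3s^2 + 5t^2 = M.  For M = 2j + 3 the parity of t splits the latter into the
   solutions of 10a^2 + 12 T c = j and of 6a^2 + 20 T c = j - 1, which are the coefficients of
   phi(q^10) psi(q^12) + q phi(q^6) psi(q^20).  The series identity then follows by multiplying
   absolutely convergent generating functions. *)

From Stdlib Require Import Bool Reals ZArith List Lia Lra FinFun.
From Coquelicot Require Import Coquelicot.

(** * Finite counting *)

Section ListCounting.

Context {A B : Type}.

Lemma length_filter_bij (l1 : list A) (l2 : list B) (P : A -> bool) (Q : B -> bool)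
    (f : A -> B) (g : B -> A) :
  NoDup l1 -> NoDup l2 ->
  (forall x, In x l1 -> P x = true -> In (f x) l2 /\ Q (f x) = true /\ g (f x) = x) ->
  (forall y, In y l2 -> Q y = true -> In (g y) l1 /\ P (g y) = true /\ f (g y) = y) ->
  length (filter P l1) = length (filter Q l2).
Proof.
  intros nd1 nd2 hf hg. apply Nat.le_antisymm.
  - rewrite <- (length_map g (filter Q l2)). apply NoDup_incl_length.
    + apply NoDup_filter, nd1.
    + intros x hx. apply filter_In in hx as [hx px].
      destruct (hf x hx px) as (hin & hq & hgf).
      rewrite <- hgf. apply in_map, filter_In. auto.
  - rewrite <- (length_map f (filter P l1)). apply NoDup_incl_length.
    + apply NoDup_filter, nd2.
    + intros y hy. apply filter_In in hy as [hy qy].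
      destruct (hg y hy qy) as (hin & hp & hfg).
      rewrite <- hfg. apply in_map, filter_In. auto.
Qed.

Lemma length_filter_split (P Q : A -> bool) (l : list A) :
  length (filter P l) =
  (length (filter (fun x => P x && Q x) l) + length (filter (fun x => P x && negb (Q x)) l))%nat.
Proof. induction l as [|a l IH]; simpl; auto. destruct (P a), (Q a); simpl; lia. Qed.

Lemma length_filter_list_prod (P : A * B -> bool) (la : list A) (lb : list B) :
  length (filter P (list_prod la lb)) =
  list_sum (map (fun a => length (filter (fun b => P (a, b)) lb)) la).
Proof.
  induction la as [|a la IH]; simpl; auto.
  rewrite filter_app, length_app, IH, filter_map_swap, length_map. reflexivity.
Qed.

Lemma NoDup_list_prod (la : list A) (lb : list B) :
  NoDup la -> NoDup lb -> NoDup (list_prod la lb).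
Proof.
  intros nda ndb. induction nda as [|a la ha nda IH]; simpl; [constructor|].
  apply NoDup_app; auto.
  - apply Injective_map_NoDup; auto. intros x y e; congruence.
  - intros [x y] h1 h2. apply in_map_iff in h1 as (y' & e & _). inversion e; subst.
    apply in_prod_iff in h2 as [h2 _]. contradiction.
Qed.

End ListCounting.

Lemma length_filter_list_prod_swap {A B : Type} (P : A * B -> bool) (la : list A) (lb : list B) :
  NoDup la -> NoDup lb ->
  length (filter P (list_prod la lb)) =
  list_sum (map (fun b => length (filter (fun a => P (a, b)) la)) lb).
Proof.
  intros nda ndb.
  rewrite <- (length_filter_list_prod (fun p : B * A => P (snd p, fst p))).
  apply length_filter_bij with (f := fun p => (snd p, fst p)) (g := fun p => (snd p, fst p));
    try (apply NoDup_list_prod; auto);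
    intros [x y] hin h; apply in_prod_iff in hin as [h1 h2]; simpl;
    repeat split; auto; apply in_prod_iff; auto.
Qed.

Fixpoint nsum (f : nat -> nat) (n : nat) : nat :=
  match n with O => O | S m => (nsum f m + f m)%nat end.

Lemma nsum_ext f g n : (forall i, (i < n)%nat -> f i = g i) -> nsum f n = nsum g n.
Proof. induction n as [|n IH]; simpl; intros h; auto. rewrite IH, h; auto. Qed.

Lemma nsum_add f g n : nsum (fun i => f i + g i)%nat n = (nsum f n + nsum g n)%nat.
Proof. induction n as [|n IH]; simpl; auto. rewrite IH; lia. Qed.

Lemma nsum_mul_l c f n : nsum (fun i => c * f i)%nat n = (c * nsum f n)%nat.
Proof. induction n as [|n IH]; simpl; [lia|]. rewrite IH; lia. Qed.

Lemma nsum_indicator (h : Z -> nat) (x : Z) n : (0 <= x)%Z ->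
  nsum (fun i => if Z.eqb x (Z.of_nat i) then h (Z.of_nat i) else O) n =
  if Z.ltb x (Z.of_nat n) then h x else O.
Proof.
  intros hx. induction n as [|n IH]; simpl.
  - destruct (Z.ltb_spec x 0); auto; lia.
  - rewrite IH. destruct (Z.eqb_spec x (Z.of_nat n)) as [->|].
    + destruct (Z.ltb_spec (Z.of_nat n) (Z.of_nat n)); try lia.
      destruct (Z.ltb_spec (Z.of_nat n) (Z.pos (Pos.of_succ_nat n))); lia.
    + destruct (Z.ltb_spec x (Z.of_nat n)), (Z.ltb_spec x (Z.pos (Pos.of_succ_nat n))); lia.
Qed.

Lemma list_sum_map_by_value {X : Type} (l : list X) (f : X -> Z) (h : Z -> nat) n :
  (forall a, In a l -> (0 <= f a)%Z) -> (forall m, (Z.of_nat n < m)%Z -> h m = O) ->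
  list_sum (map (fun a => h (f a)) l) =
  nsum (fun i => length (filter (fun a => Z.eqb (f a) (Z.of_nat i)) l) * h (Z.of_nat i))%nat (S n).
Proof.
  intros hf hh. induction l as [|a l IH].
  - simpl. clear. induction n; simpl; lia.
  - change (list_sum (map (fun a => h (f a)) (a :: l)))
      with (h (f a) + list_sum (map (fun a => h (f a)) l))%nat.
    rewrite IH by (intros; apply hf; simpl; auto).
    transitivity (nsum (fun i => if Z.eqb (f a) (Z.of_nat i) then h (Z.of_nat i) else O) (S n)
      + nsum (fun i => length (filter (fun b => Z.eqb (f b) (Z.of_nat i)) l) * h (Z.of_nat i)) (S n))%nat.
    + rewrite nsum_indicator by (apply hf; simpl; auto).
      destruct (Z.ltb_spec (f a) (Z.of_nat (S n))); auto.
      rewrite hh by lia. reflexivity.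
    + rewrite <- nsum_add. apply nsum_ext. intros i _. cbn [filter].
      destruct (Z.eqb (f a) (Z.of_nat i)); simpl; lia.
Qed.

Section Triangular.

Local Open Scope Z_scope.

Lemma tri_double x : 2 * tri x = x * (x + 1).
Proof.
  unfold tri. destruct (Z.Even_or_Odd x) as [[k ->]|[k ->]].
  - replace (2 * k * (2 * k + 1)) with (k * (2 * k + 1) * 2) by ring.
    rewrite Z.div_mul by lia. ring.
  - replace ((2 * k + 1) * (2 * k + 1 + 1)) with ((2 * k + 1) * (k + 1) * 2) by ring.
    rewrite Z.div_mul by lia. ring.
Qed.

Lemma tri_bounds x : 0 <= tri x /\ x <= tri x /\ - x - 1 <= tri x.
Proof. pose proof (tri_double x). destruct (Z_le_gt_dec 0 x); nia. Qed.

Lemma odd_square_tri x : (2 * x + 1) * (2 * x + 1) = 8 * tri x + 1.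
Proof. pose proof (tri_double x). nia. Qed.

Lemma tri_reflect x : tri (- x - 1) = tri x.
Proof. pose proof (tri_double x). pose proof (tri_double (- x - 1)). nia. Qed.

Lemma tri_of_nat n : Z.of_nat (n * (n + 1) / 2) = tri (Z.of_nat n).
Proof. unfold tri. rewrite Nat2Z.inj_div, Nat2Z.inj_mul, Nat2Z.inj_add. reflexivity. Qed.

Lemma square_parity s : exists k, s * s = s + 2 * k.
Proof. exists (tri (s - 1)). pose proof (tri_double (s - 1)). lia. Qed.

End Triangular.

Section Box.

Local Open Scope Z_scope.

Definition in_box (n : nat) (x : Z) : Prop := - Z.of_nat n - 1 <= x <= Z.of_nat n.

Lemma In_zrange n x : In x (zrange n) <-> in_box n x.
Proof.
  unfold zrange, in_box. rewrite in_map_iff. split.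
  - intros (k & <- & hk). apply in_seq in hk. lia.
  - intros h. exists (Z.to_nat (x + Z.of_nat n + 1)). split; [lia|]. apply in_seq. lia.
Qed.

Lemma NoDup_zrange n : NoDup (zrange n).
Proof.
  apply Injective_map_NoDup; [|apply seq_NoDup].
  intros a b e. lia.
Qed.

Lemma in_box_of_square n x : x * x <= Z.of_nat n -> in_box n x.
Proof. unfold in_box. intros. destruct (Z_le_gt_dec 0 x); nia. Qed.

Lemma in_box_of_tri n x : tri x <= Z.of_nat n -> in_box n x.
Proof. unfold in_box. intros. pose proof (tri_bounds x). lia. Qed.

Definition count1 (n : nat) (P : Z -> bool) : nat := length (filter P (zrange n)).

Definition count2 (n : nat) (P : Z -> Z -> bool) : nat :=
  length (filter (fun p => P (fst p) (snd p)) (list_prod (zrange n) (zrange n))).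

Lemma count2_bij n1 n2 (P Q : Z -> Z -> bool) (f1 f2 g1 g2 : Z -> Z -> Z) :
  (forall x y, in_box n1 x -> in_box n1 y -> P x y = true ->
     in_box n2 (f1 x y) /\ in_box n2 (f2 x y) /\ Q (f1 x y) (f2 x y) = true /\
     g1 (f1 x y) (f2 x y) = x /\ g2 (f1 x y) (f2 x y) = y) ->
  (forall u v, in_box n2 u -> in_box n2 v -> Q u v = true ->
     in_box n1 (g1 u v) /\ in_box n1 (g2 u v) /\ P (g1 u v) (g2 u v) = true /\
     f1 (g1 u v) (g2 u v) = u /\ f2 (g1 u v) (g2 u v) = v) ->
  count2 n1 P = count2 n2 Q.
Proof.
  intros h1 h2. unfold count2.
  apply (length_filter_bij _ _ _ _ (fun p => (f1 (fst p) (snd p), f2 (fst p) (snd p)))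
                                   (fun p => (g1 (fst p) (snd p), g2 (fst p) (snd p))));
    try (apply NoDup_list_prod; apply NoDup_zrange).
  - intros [x y] hin h. simpl in *. apply in_prod_iff in hin as [hx hy].
    apply In_zrange in hx, hy. destruct (h1 x y hx hy h) as (? & ? & ? & -> & ->).
    repeat split; auto. apply in_prod_iff; split; apply In_zrange; auto.
  - intros [u v] hin h. simpl in *. apply in_prod_iff in hin as [hu hv].
    apply In_zrange in hu, hv. destruct (h2 u v hu hv h) as (? & ? & ? & -> & ->).
    repeat split; auto. apply in_prod_iff; split; apply In_zrange; auto.
Qed.

Lemma count2_split n P Q :
  count2 n P = (count2 n (fun x y => P x y && Q x y) + count2 n (fun x y => P x y && negb (Q x y)))%nat.
Proof. apply length_filter_split with (Q := fun p => Q (fst p) (snd p)). Qed.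

Lemma count2_ext n P Q : (forall x y, P x y = Q x y) -> count2 n P = count2 n Q.
Proof. intros h. unfold count2. f_equal. apply filter_ext. intros; apply h. Qed.

Lemma count2_false n P : (forall x y, P x y = false) -> count2 n P = O.
Proof.
  intros h. unfold count2. rewrite (filter_ext _ (fun _ => false)), filter_false; auto.
Qed.

Lemma count2_reflect_half n P Q (s : Z -> Z) :
  (forall y, s (s y) = y) ->
  (forall x y, in_box n y -> P x y = true -> in_box n (s y) /\ P x (s y) = true) ->
  (forall x y, P x y = true -> Q x (s y) = negb (Q x y)) ->
  count2 n P = (2 * count2 n (fun x y => P x y && Q x y))%nat.
Proof.
  intros hs hP hQ. rewrite (count2_split n P Q).
  enough (count2 n (fun x y => P x y && negb (Q x y)) = count2 n (fun x y => P x y && Q x y)) by lia.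
  apply count2_bij with (f1 := fun x y => x) (f2 := fun x y => s y)
                        (g1 := fun x y => x) (g2 := fun x y => s y);
    intros x y hx hy h; apply andb_true_iff in h as [hp hq];
    destruct (hP x y hy hp) as [hy' hp']; rewrite hs, hp', hQ, ?negb_involutive; auto.
Qed.

End Box.

Ltac bool_to_Prop :=
  repeat match goal with
  | H : (_ && _) = true |- _ => apply andb_true_iff in H as [? ?]
  | H : (_ =? _)%Z = true |- _ => apply Z.eqb_eq in H
  | |- (_ && _) = true => apply andb_true_iff; split
  | |- (_ =? _)%Z = true => apply Z.eqb_eq
  end.

Ltac split_conj := repeat match goal with |- _ /\ _ => split end.

(* [lia_mod] can fail when nonlinear hypotheses are in the context: hence the [clear]s before
   some of its calls. *)
Ltac lia_mod := Z.div_mod_to_equations; lia.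

(** * Representations by the form 3u^2 + 5v^2 *)

Section Residues.

Local Open Scope Z_scope.

Definition residues16 : list Z := map Z.of_nat (seq 0 16).

Lemma residues16_check (F : Z -> Z -> bool) :
  forallb (fun a => forallb (F a) residues16) residues16 = true ->
  forall u v, F (u mod 16) (v mod 16) = true.
Proof.
  intros h u v.
  assert (hin : forall x, In (x mod 16) residues16).
  { intros x. apply in_map_iff. exists (Z.to_nat (x mod 16)).
    pose proof (Z.mod_pos_bound x 16). split; [lia|]. apply in_seq. lia. }
  rewrite forallb_forall in h. specialize (h _ (hin u)).
  rewrite forallb_forall in h. apply h, hin.
Qed.

Lemma form35_mod32 u v : exists w,
  3 * u * u + 5 * v * v = 3 * (u mod 16) * (u mod 16) + 5 * (v mod 16) * (v mod 16) + 32 * w.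
Proof.
  pose proof (Z_div_mod_eq_full u 16). pose proof (Z_div_mod_eq_full v 16).
  set (p := u / 16) in *; set (q := v / 16) in *.
  set (a := u mod 16) in *; set (b := v mod 16) in *.
  exists (24 * p * p + 3 * p * a + 40 * q * q + 5 * q * b). clearbody p q a b. subst u v. ring.
Qed.

Lemma odd_form35_mod32_0 u v :
  u mod 2 = 1 -> v mod 2 = 1 -> (3 * u * u + 5 * v * v) mod 32 = 0 ->
  (u + 5 * v) mod 8 = 0 \/ (u - 5 * v) mod 8 = 0.
Proof.
  intros hu hv h. destruct (form35_mod32 u v) as [w hw].
  pose proof (residues16_check (fun a b =>
    implb ((a mod 2 =? 1) && (b mod 2 =? 1) && ((3 * a * a + 5 * b * b) mod 32 =? 0))
          (((a + 5 * b) mod 8 =? 0) || ((a - 5 * b) mod 8 =? 0)))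
    ltac:(vm_compute; reflexivity) u v) as check.
  cbv beta in check. rewrite implb_true_iff, !andb_true_iff, orb_true_iff, !Z.eqb_eq in check.
  lia_mod.
Qed.

Lemma odd_form35_mod32_16 u v :
  u mod 2 = 1 -> v mod 2 = 1 -> (3 * u * u + 5 * v * v) mod 32 = 16 ->
  (u + 5 * v) mod 16 = 0 /\ (3 * u - v) mod 16 = 0 \/
  (u - 5 * v) mod 16 = 0 /\ (3 * u + v) mod 16 = 0.
Proof.
  intros hu hv h. destruct (form35_mod32 u v) as [w hw].
  pose proof (residues16_check (fun a b =>
    implb ((a mod 2 =? 1) && (b mod 2 =? 1) && ((3 * a * a + 5 * b * b) mod 32 =? 16))
          (((a + 5 * b) mod 16 =? 0) && ((3 * a - b) mod 16 =? 0) ||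
           ((a - 5 * b) mod 16 =? 0) && ((3 * a + b) mod 16 =? 0)))
    ltac:(vm_compute; reflexivity) u v) as check.
  cbv beta in check. rewrite implb_true_iff, !andb_true_iff, orb_true_iff, !andb_true_iff, !Z.eqb_eq in check.
  lia_mod.
Qed.

End Residues.

Section Form35.

Local Open Scope Z_scope.

Definition tri_sol35 (M x y : Z) : bool := 3 * tri x + 5 * tri y =? M.
Definition odd_sol35 (K u v : Z) : bool :=
  (u mod 2 =? 1) && (v mod 2 =? 1) && (3 * u * u + 5 * v * v =? K).
Definition sol35 (M s t : Z) : bool := 3 * s * s + 5 * t * t =? M.

Definition rep35_tri (M : Z) : nat := count2 (Z.to_nat M) (tri_sol35 M).
Definition rep35_odd (K : Z) : nat := count2 (Z.to_nat K) (odd_sol35 K).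
Definition rep35 (M : Z) : nat := count2 (Z.to_nat M) (sol35 M).

Lemma odd_sol35_spec K u v :
  odd_sol35 K u v = true <-> u mod 2 = 1 /\ v mod 2 = 1 /\ 3 * u * u + 5 * v * v = K.
Proof. unfold odd_sol35. rewrite !andb_true_iff, !Z.eqb_eq. tauto. Qed.

Lemma odd_witness u : u mod 2 = 1 -> exists x, u = 2 * x + 1.
Proof. intros h. exists ((u - 1) / 2). lia_mod. Qed.

Lemma half_pred_odd x : (2 * x + 1 - 1) / 2 = x.
Proof. lia_mod. Qed.

Lemma half_double x : 2 * x / 2 = x.
Proof. lia_mod. Qed.

Lemma mod0_witness d a : 0 < d -> a mod d = 0 -> exists k, a = k * d.
Proof. intros hd h. exists (a / d). rewrite Z.mul_comm. apply Z.div_exact; lia. Qed.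

Lemma form35_mul16 u v :
  3 * (u + 5 * v) * (u + 5 * v) + 5 * (3 * u - v) * (3 * u - v) = 16 * (3 * u * u + 5 * v * v).
Proof. ring. Qed.

Lemma form35_parity s t M : 3 * s * s + 5 * t * t = M -> (s + t) mod 2 = M mod 2.
Proof.
  intros h. destruct (square_parity s) as [k hk], (square_parity t) as [l hl]. lia_mod.
Qed.

Lemma count2_tri_sol35 n M : M <= Z.of_nat n -> count2 n (tri_sol35 M) = rep35_tri M.
Proof.
  intros hM. unfold rep35_tri.
  apply count2_bij with (f1 := fun x y => x) (f2 := fun x y => y)
                        (g1 := fun x y => x) (g2 := fun x y => y);
    intros x y _ _ h; unfold tri_sol35 in *; bool_to_Prop;
    pose proof (tri_bounds x); pose proof (tri_bounds y);
    split_conj; try apply in_box_of_tri; bool_to_Prop; lia.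
Qed.

Lemma rep35_tri_vanish M : M < 0 \/ M = 1 -> rep35_tri M = O.
Proof.
  intros hM. apply count2_false. intros x y. apply Z.eqb_neq.
  pose proof (tri_bounds x). pose proof (tri_bounds y). lia.
Qed.

Lemma rep35_tri_odd M : 0 <= M -> rep35_tri M = rep35_odd (8 * M + 8).
Proof.
  intros hM. unfold rep35_tri, rep35_odd.
  apply count2_bij with (f1 := fun x y => 2 * x + 1) (f2 := fun x y => 2 * y + 1)
                        (g1 := fun u v => (u - 1) / 2) (g2 := fun u v => (v - 1) / 2).
  - intros x y _ _ h. unfold tri_sol35, odd_sol35 in *. bool_to_Prop.
    pose proof (odd_square_tri x); pose proof (odd_square_tri y).
    pose proof (tri_bounds x); pose proof (tri_bounds y).
    split_conj; try apply in_box_of_square; bool_to_Prop; lia_mod.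
  - intros u v _ _ h. unfold tri_sol35, odd_sol35 in *. bool_to_Prop.
    destruct (odd_witness u) as [x ->], (odd_witness v) as [y ->]; auto.
    pose proof (odd_square_tri x); pose proof (odd_square_tri y).
    pose proof (tri_bounds x); pose proof (tri_bounds y).
    rewrite !half_pred_odd. split_conj; try apply in_box_of_tri; bool_to_Prop; lia_mod.
Qed.

Lemma odd_sol35_opp K u v : in_box (Z.to_nat K) v -> odd_sol35 K u v = true ->
  in_box (Z.to_nat K) (- v) /\ odd_sol35 K u (- v) = true.
Proof.
  intros _ h. apply odd_sol35_spec in h as (hu & hv & hK).
  pose proof (Z.square_nonneg u). pose proof (Z.square_nonneg v).
  split; [apply in_box_of_square; lia | apply odd_sol35_spec; split_conj; lia_mod].
Qed.

Lemma odd_sol35_flip4 K u v : odd_sol35 (8 * K) u v = true ->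
  ((u + - v) mod 4 =? 2) = negb ((u + v) mod 4 =? 2).
Proof.
  intros h. apply odd_sol35_spec in h as (hu & hv & _).
  destruct (Z.eqb_spec ((u + - v) mod 4) 2), (Z.eqb_spec ((u + v) mod 4) 2); simpl; lia_mod.
Qed.

Lemma odd_sol35_flip8 K u v : odd_sol35 (32 * K) u v = true ->
  ((u + 5 * - v) mod 8 =? 0) = negb ((u + 5 * v) mod 8 =? 0).
Proof.
  intros h. apply odd_sol35_spec in h as (hu & hv & hK).
  assert (h32 : (3 * u * u + 5 * v * v) mod 32 = 0) by (rewrite hK; lia_mod).
  pose proof (odd_form35_mod32_0 u v hu hv h32).
  destruct (Z.eqb_spec ((u + 5 * - v) mod 8) 0), (Z.eqb_spec ((u + 5 * v) mod 8) 0); simpl;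
    clear hK h32; lia_mod.
Qed.

Lemma odd_sol35_flip16 M u v : odd_sol35 (16 * M) u v = true -> M mod 2 = 1 ->
  (((u + 5 * - v) mod 16 =? 0) && ((3 * u - - v) mod 16 =? 0)) =
  negb (((u + 5 * v) mod 16 =? 0) && ((3 * u - v) mod 16 =? 0)).
Proof.
  intros h hM. apply odd_sol35_spec in h as (hu & hv & hK).
  assert (h32 : (3 * u * u + 5 * v * v) mod 32 = 16) by (rewrite hK; lia_mod).
  pose proof (odd_form35_mod32_16 u v hu hv h32).
  destruct (Z.eqb_spec ((u + 5 * - v) mod 16) 0), (Z.eqb_spec ((3 * u - - v) mod 16) 0),
    (Z.eqb_spec ((u + 5 * v) mod 16) 0), (Z.eqb_spec ((3 * u - v) mod 16) 0); simpl;
    clear hK h32; lia_mod.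
Qed.

Lemma odd_pair_of_form35 u v K :
  3 * u * u + 5 * v * v = 8 * K -> (u + 5 * v) mod 4 = 2 -> u mod 2 = 1 /\ v mod 2 = 1.
Proof.
  intros h h4.
  destruct (Z.Even_or_Odd u) as [[a ->]|[a ->]], (Z.Even_or_Odd v) as [[c ->]|[c ->]];
    lia_mod.
Qed.

Lemma count2_odd_sol35_8_32 K :
  count2 (Z.to_nat (8 * K)) (fun u v => odd_sol35 (8 * K) u v && ((u + v) mod 4 =? 2)) =
  count2 (Z.to_nat (32 * K)) (fun u v => odd_sol35 (32 * K) u v && ((u + 5 * v) mod 8 =? 0)).
Proof.
  apply count2_bij with (f1 := fun u v => (u + 5 * v) / 2) (f2 := fun u v => (3 * u - v) / 2)
                        (g1 := fun u v => (u + 5 * v) / 8) (g2 := fun u v => (3 * u - v) / 8);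
    intros u v _ _ h; apply andb_true_iff in h as [h hmod];
    apply odd_sol35_spec in h as (hu & hv & hK); apply Z.eqb_eq in hmod.
  - destruct (mod0_witness 2 (u + 5 * v)) as [x hx], (mod0_witness 2 (3 * u - v)) as [y hy];
      try (clear hK; lia_mod).
    assert (x mod 2 = 1 /\ y mod 2 = 1 /\ x + 5 * y = u * 8 /\ 3 * x - y = v * 8)
      as (hxo & hyo & hx8 & hy8) by (clear hK; lia_mod).
    assert (hK' : 3 * x * x + 5 * y * y = 32 * K)
      by (pose proof (form35_mul16 u v); rewrite hx, hy in *; lia).
    pose proof (Z.square_nonneg x). pose proof (Z.square_nonneg y).
    rewrite hx, hy, !Z.div_mul, hx8, hy8, !Z.div_mul by lia.
    split_conj; try apply in_box_of_square; try lia.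
    apply andb_true_iff; split; [apply odd_sol35_spec; auto | apply Z.eqb_eq].
    clear hK hK'. lia_mod.
  - destruct (mod0_witness 8 (u + 5 * v)) as [x hx], (mod0_witness 8 (3 * u - v)) as [y hy];
      try lia; try (clear hK; lia_mod).
    rewrite hx, hy, !Z.div_mul by lia.
    assert (hx2 : x + 5 * y = u * 2) by lia. assert (hy2 : 3 * x - y = v * 2) by lia.
    assert (hK' : 3 * x * x + 5 * y * y = 8 * K)
      by (pose proof (form35_mul16 x y); rewrite hx2, hy2 in *; lia).
    assert (h4 : (x + 5 * y) mod 4 = 2) by (clear hK hK'; lia_mod).
    destruct (odd_pair_of_form35 x y K hK' h4) as [hxo hyo].
    pose proof (Z.square_nonneg x). pose proof (Z.square_nonneg y).
    rewrite hx2, hy2, !Z.div_mul by lia.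
    split_conj; try apply in_box_of_square; try lia.
    apply andb_true_iff; split; [apply odd_sol35_spec; auto | apply Z.eqb_eq].
    clear hK hK'. lia_mod.
Qed.

Lemma rep35_odd_mul4 K : rep35_odd (32 * K) = rep35_odd (8 * K).
Proof.
  unfold rep35_odd.
  rewrite (count2_reflect_half _ (odd_sol35 (32 * K)) (fun u v => (u + 5 * v) mod 8 =? 0) Z.opp),
    (count2_reflect_half _ (odd_sol35 (8 * K)) (fun u v => (u + v) mod 4 =? 2) Z.opp).
  - rewrite count2_odd_sol35_8_32. reflexivity.
  - exact Z.opp_involutive.
  - exact (odd_sol35_opp _).
  - exact (odd_sol35_flip4 K).
  - exact Z.opp_involutive.
  - exact (odd_sol35_opp _).
  - exact (odd_sol35_flip8 K).
Qed.

Lemma count2_odd_sol35_16 M : M mod 2 = 1 ->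
  count2 (Z.to_nat (16 * M))
    (fun u v => odd_sol35 (16 * M) u v && (((u + 5 * v) mod 16 =? 0) && ((3 * u - v) mod 16 =? 0))) =
  rep35 M.
Proof.
  intros hM. unfold rep35, sol35.
  apply count2_bij with (f1 := fun u v => (u + 5 * v) / 16) (f2 := fun u v => (3 * u - v) / 16)
                        (g1 := fun s t => s + 5 * t) (g2 := fun s t => 3 * s - t).
  - intros u v _ _ h. apply andb_true_iff in h as [h hmod].
    apply odd_sol35_spec in h as (hu & hv & hK). apply andb_true_iff in hmod as [hx hy].
    apply Z.eqb_eq in hx, hy.
    destruct (mod0_witness 16 _ ltac:(lia) hx) as [s hs], (mod0_witness 16 _ ltac:(lia) hy) as [t ht].
    pose proof (form35_mul16 u v). rewrite hs, ht, !Z.div_mul in * by lia.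
    pose proof (Z.square_nonneg s). pose proof (Z.square_nonneg t).
    split_conj; try apply in_box_of_square; try apply Z.eqb_eq; lia.
  - intros s t _ _ h. apply Z.eqb_eq in h.
    assert (hst : (s + t) mod 2 = 1) by (rewrite (form35_parity s t M h); exact hM).
    pose proof (form35_mul16 s t).
    pose proof (Z.square_nonneg (s + 5 * t)). pose proof (Z.square_nonneg (3 * s - t)).
    replace ((s + 5 * t + 5 * (3 * s - t)) / 16) with s by lia_mod.
    replace ((3 * (s + 5 * t) - (3 * s - t)) / 16) with t by lia_mod.
    split_conj; try apply in_box_of_square; try lia.
    apply andb_true_iff; split; [apply odd_sol35_spec; split_conj; try lia|].
    + clear - hst. lia_mod.
    + clear - hst. lia_mod.
    + apply andb_true_iff; split; apply Z.eqb_eq; lia_mod.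
Qed.

Lemma rep35_odd_mul16 M : M mod 2 = 1 -> rep35_odd (16 * M) = (2 * rep35 M)%nat.
Proof.
  intros hM. unfold rep35_odd.
  rewrite (count2_reflect_half _ (odd_sol35 (16 * M))
             (fun u v => ((u + 5 * v) mod 16 =? 0) && ((3 * u - v) mod 16 =? 0)) Z.opp).
  - rewrite count2_odd_sol35_16 by exact hM. reflexivity.
  - exact Z.opp_involutive.
  - exact (odd_sol35_opp _).
  - intros u v h. exact (odd_sol35_flip16 M u v h hM).
Qed.

Lemma rep35_split j :
  rep35 (2 * Z.of_nat j + 3) =
  (count2 j (fun a c => (10 * a * a + 12 * tri c =? Z.of_nat j)%Z) +
   count2 j (fun a c => (6 * a * a + 20 * tri c =? Z.of_nat j - 1)%Z))%nat.
Proof.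
  unfold rep35, sol35. rewrite (count2_split _ _ (fun s t => t mod 2 =? 0)). f_equal.
  - apply count2_bij with (f1 := fun s t => t / 2) (f2 := fun s t => (s - 1) / 2)
                          (g1 := fun a c => 2 * c + 1) (g2 := fun a c => 2 * a).
    + intros s t _ _ h. apply andb_true_iff in h as [h ht]. apply Z.eqb_eq in h, ht.
      pose proof (form35_parity s t _ h) as hst.
      destruct (odd_witness s) as [c ->], (mod0_witness 2 t) as [a ->];
        try (clear h; lia_mod).
      pose proof (odd_square_tri c). pose proof (tri_bounds c). pose proof (Z.square_nonneg a).
      rewrite half_pred_odd, Z.div_mul by lia.
      split_conj; [apply in_box_of_square | apply in_box_of_tri | apply Z.eqb_eq | ..]; lia.
    + intros a c _ _ h. apply Z.eqb_eq in h.
      pose proof (odd_square_tri c). pose proof (tri_bounds c). pose proof (Z.square_nonneg a).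
      rewrite half_pred_odd, half_double.
      split_conj; try apply in_box_of_square; try lia.
      apply andb_true_iff; split; apply Z.eqb_eq; [lia | lia_mod].
  - apply count2_bij with (f1 := fun s t => s / 2) (f2 := fun s t => (t - 1) / 2)
                          (g1 := fun a c => 2 * a) (g2 := fun a c => 2 * c + 1).
    + intros s t _ _ h. apply andb_true_iff in h as [h ht].
      apply Z.eqb_eq in h. apply negb_true_iff, Z.eqb_neq in ht.
      pose proof (form35_parity s t _ h) as hst.
      destruct (mod0_witness 2 s) as [a ->], (odd_witness t) as [c ->];
        try (clear h; lia_mod).
      pose proof (odd_square_tri c). pose proof (tri_bounds c). pose proof (Z.square_nonneg a).
      rewrite half_pred_odd, Z.div_mul by lia.
      split_conj; [apply in_box_of_square | apply in_box_of_tri | apply Z.eqb_eq | ..]; lia.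
    + intros a c _ _ h. apply Z.eqb_eq in h.
      pose proof (odd_square_tri c). pose proof (tri_bounds c). pose proof (Z.square_nonneg a).
      rewrite half_pred_odd, half_double.
      split_conj; try apply in_box_of_square; try lia.
      apply andb_true_iff; split; [apply Z.eqb_eq; lia | apply negb_true_iff, Z.eqb_neq; lia_mod].
Qed.

End Form35.

(** * Coefficients of the theta functions *)

(* The number of [k <= i] with [g k = i]; this is the whole fiber of [g] over [i] as soon as
   [k <= g k] for all [k]. *)
Definition fiber_count (g : nat -> nat) (i : nat) : nat :=
  length (filter (fun k => Nat.eqb (g k) i) (seq 0 (S i))).

Definition psi_coef (e i : nat) : nat := fiber_count (fun k => e * (k * (k + 1) / 2))%nat i.

Definition phi_coef (e i : nat) : nat :=
  (fiber_count (fun k => e * (k * k)) i + fiber_count (fun k => e * ((k + 1) * (k + 1))) i)%nat.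

Definition conv (a c : nat -> nat) (n : nat) : nat := nsum (fun i => a i * c (n - i))%nat (S n).

Definition coef_shift (a : nat -> nat) (n : nat) : nat := match n with O => O | S m => a m end.

Lemma count2_sum_conv n (f g : Z -> Z) (j : nat) :
  (forall a, 0 <= f a)%Z -> (forall c, 0 <= g c)%Z ->
  count2 n (fun a c => f a + g c =? Z.of_nat j)%Z =
  nsum (fun i => count1 n (fun a => f a =? Z.of_nat i)%Z *
                 count1 n (fun c => g c =? Z.of_nat (j - i))%Z)%nat (S j).
Proof.
  intros hf hg. unfold count2. rewrite length_filter_list_prod. cbn [fst snd].
  set (h := fun m => if (m <=? Z.of_nat j)%Z then count1 n (fun c => g c =? Z.of_nat j - m)%Z else O).
  rewrite (map_ext _ (fun a => h (f a))).
  2:{ intros a. unfold h, count1. destruct (Z.leb_spec (f a) (Z.of_nat j)).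
      - f_equal. apply filter_ext. intros c.
        destruct (Z.eqb_spec (f a + g c) (Z.of_nat j)), (Z.eqb_spec (g c) (Z.of_nat j - f a)); lia.
      - rewrite (filter_ext _ (fun _ => false)), filter_false; auto.
        intros c. apply Z.eqb_neq. specialize (hg c). lia. }
  rewrite (list_sum_map_by_value _ f h j); auto.
  - apply nsum_ext. intros i hi. unfold h, count1. f_equal.
    destruct (Z.leb_spec (Z.of_nat i) (Z.of_nat j)); [|lia].
    f_equal. apply filter_ext. intros c. f_equal. lia.
  - intros m hm. unfold h. destruct (Z.leb_spec m (Z.of_nat j)); auto; lia.
Qed.

Lemma count1_fibers n (F : Z -> Z) (gp gn : nat -> nat) i :
  (forall k, k <= gp k)%nat -> (forall k, k <= gn k)%nat -> (i <= n)%nat ->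
  (forall k, F (Z.of_nat k) = Z.of_nat (gp k)) ->
  (forall k, F (- Z.of_nat k - 1)%Z = Z.of_nat (gn k)) ->
  count1 n (fun a => F a =? Z.of_nat i)%Z = (fiber_count gp i + fiber_count gn i)%nat.
Proof.
  intros hp hn hi Fp Fn. unfold count1, fiber_count.
  rewrite (length_filter_split _ (fun a => 0 <=? a)%Z). f_equal.
  - apply length_filter_bij with (f := Z.to_nat) (g := Z.of_nat);
      [apply NoDup_zrange | apply seq_NoDup | |].
    + intros a ha h. apply andb_true_iff in h as [h ha0].
      apply Z.eqb_eq in h. apply Z.leb_le in ha0.
      rewrite <- (Z2Nat.id a), Fp in h by lia. specialize (hp (Z.to_nat a)).
      split; [apply in_seq; lia|]. split; [apply Nat.eqb_eq; lia | lia].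
    + intros k hk h. apply Nat.eqb_eq in h. apply in_seq in hk.
      split; [apply In_zrange; unfold in_box; lia|]. split; [|lia].
      apply andb_true_iff. rewrite Z.eqb_eq, Z.leb_le, Fp. lia.
  - apply length_filter_bij with (f := fun a => Z.to_nat (- a - 1)) (g := fun k => (- Z.of_nat k - 1)%Z);
      [apply NoDup_zrange | apply seq_NoDup | |].
    + intros a ha h. apply andb_true_iff in h as [h ha0].
      apply Z.eqb_eq in h. apply negb_true_iff, Z.leb_gt in ha0.
      replace a with (- Z.of_nat (Z.to_nat (- a - 1)) - 1)%Z in h by lia.
      rewrite Fn in h. specialize (hn (Z.to_nat (- a - 1))).
      split; [apply in_seq; lia|]. split; [apply Nat.eqb_eq; lia | lia].
    + intros k hk h. apply Nat.eqb_eq in h. apply in_seq in hk.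
      split; [apply In_zrange; unfold in_box; lia|]. split; [|lia].
      apply andb_true_iff. rewrite Z.eqb_eq, negb_true_iff, Z.leb_gt, Fn. lia.
Qed.

Lemma count1_square n e i : (1 <= e)%nat -> (i <= n)%nat ->
  count1 n (fun a => Z.of_nat e * a * a =? Z.of_nat i)%Z = phi_coef e i.
Proof.
  intros he hi. apply count1_fibers; auto; intros k; try nia; rewrite !Nat2Z.inj_mul; try lia.
Qed.

Lemma count1_tri n e i : (1 <= e)%nat -> (i <= n)%nat ->
  count1 n (fun a => Z.of_nat e * tri a =? Z.of_nat i)%Z = (2 * psi_coef e i)%nat.
Proof.
  intros he hi. unfold psi_coef.
  assert (hk : forall k, (k <= e * (k * (k + 1) / 2))%nat).
  { intros k. assert (k <= k * (k + 1) / 2)%nat by (apply Nat.div_le_lower_bound; nia). nia. }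
  rewrite (count1_fibers n _ (fun k => e * (k * (k + 1) / 2))%nat (fun k => e * (k * (k + 1) / 2))%nat);
    auto; [lia | |]; intros k; rewrite Nat2Z.inj_mul, tri_of_nat; [reflexivity|].
  rewrite tri_reflect. reflexivity.
Qed.

Lemma t_eq_sum_rep35_tri c N :
  t 3 5 c N = list_sum (map (fun z => rep35_tri (Z.of_nat N - Z.of_nat c * tri z)) (zrange N)).
Proof.
  unfold t. rewrite length_filter_list_prod_swap by auto using NoDup_list_prod, NoDup_zrange.
  f_equal. apply map_ext. intros z.
  pose proof (tri_bounds z).
  rewrite <- (count2_tri_sol35 N) by nia. unfold count2, tri_sol35. f_equal.
  apply filter_ext. intros [x y]. cbn [fst snd].
  destruct (Z.eqb_spec (Z.of_nat 3 * tri x + Z.of_nat 5 * tri y + Z.of_nat c * tri z) (Z.of_nat N)),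
    (Z.eqb_spec (3 * tri x + 5 * tri y) (Z.of_nat N - Z.of_nat c * tri z)); lia.
Qed.

Lemma t_eq_psi_conv k b N n : (1 <= b)%nat -> (n <= N)%nat ->
  (forall m, Z.of_nat n < m -> rep35_tri (Z.of_nat N - Z.of_nat k * m) = O)%Z ->
  t 3 5 (k * b) N =
  nsum (fun i => 2 * psi_coef b i * rep35_tri (Z.of_nat N - Z.of_nat k * Z.of_nat i))%nat (S n).
Proof.
  intros hb hn hvanish. rewrite t_eq_sum_rep35_tri.
  set (h := fun m => rep35_tri (Z.of_nat N - Z.of_nat k * m)).
  rewrite (map_ext _ (fun z => h (Z.of_nat b * tri z)%Z))
    by (intros z; unfold h; f_equal; rewrite Nat2Z.inj_mul; ring).
  rewrite (list_sum_map_by_value _ (fun z => Z.of_nat b * tri z)%Z h n); auto.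
  - apply nsum_ext. intros i hi. f_equal.
    pose proof (count1_tri N b i hb ltac:(lia)) as e. unfold count1 in e. rewrite e. reflexivity.
  - intros z _. pose proof (tri_bounds z). lia.
Qed.

Lemma t_4n3_eq b n : (1 <= b)%nat -> t 3 5 (4 * b) (4 * n + 3) = t 3 5 b n.
Proof.
  intros hb. rewrite <- (Nat.mul_1_l b) at 2.
  rewrite (t_eq_psi_conv 4 b (4 * n + 3) n), (t_eq_psi_conv 1 b n n) by
    first [assumption | lia | intros; apply rep35_tri_vanish; lia].
  apply nsum_ext. intros i hi. f_equal.
  rewrite !rep35_tri_odd by lia.
  replace (8 * (Z.of_nat (4 * n + 3) - Z.of_nat 4 * Z.of_nat i) + 8)%Z
    with (32 * (Z.of_nat n - Z.of_nat i + 1))%Z by lia.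
  rewrite rep35_odd_mul4. f_equal. lia.
Qed.

Lemma count2_phi_psi n e f j : (1 <= e)%nat -> (1 <= f)%nat -> (j <= n)%nat ->
  count2 n (fun a c => Z.of_nat e * a * a + Z.of_nat f * tri c =? Z.of_nat j)%Z =
  (2 * conv (phi_coef e) (psi_coef f) j)%nat.
Proof.
  intros he hf hj.
  rewrite count2_sum_conv by (intros; try pose proof (tri_bounds c); nia).
  unfold conv. rewrite <- nsum_mul_l. apply nsum_ext. intros i hi.
  rewrite count1_square, count1_tri by lia. lia.
Qed.

Lemma rep35_tri_4d5 d :
  rep35_tri (4 * Z.of_nat d + 5) =
  (4 * (conv (phi_coef 10) (psi_coef 12) d + coef_shift (conv (phi_coef 6) (psi_coef 20)) d))%nat.
Proof.
  rewrite rep35_tri_odd by lia.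
  replace (8 * (4 * Z.of_nat d + 5) + 8)%Z with (16 * (2 * Z.of_nat d + 3))%Z by ring.
  rewrite rep35_odd_mul16, rep35_split by lia_mod.
  pose proof (count2_phi_psi d 10 12 d) as h10. pose proof (count2_phi_psi d 6 20) as h6.
  simpl Z.of_nat in h10, h6. rewrite h10 by lia.
  destruct d as [|d]; cbn [coef_shift].
  - rewrite count2_false; [lia|]. intros a c. apply Z.eqb_neq.
    pose proof (tri_bounds c). pose proof (Z.square_nonneg a). lia.
  - rewrite (count2_ext _ _ (fun a c => 6 * a * a + 20 * tri c =? Z.of_nat d)%Z), h6 by
      first [lia | intros; f_equal; lia].
    lia.
Qed.

Lemma t_4n5_eq_conv b n : (1 <= b)%nat ->
  t 3 5 (4 * b) (4 * n + 5) =
  (8 * conv (psi_coef b)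
         (fun d => conv (phi_coef 10) (psi_coef 12) d + coef_shift (conv (phi_coef 6) (psi_coef 20)) d) n)%nat.
Proof.
  intros hb.
  rewrite (t_eq_psi_conv 4 b (4 * n + 5) n) by first [assumption | lia | intros; apply rep35_tri_vanish; lia].
  unfold conv at 1. rewrite <- nsum_mul_l. apply nsum_ext. intros i hi.
  replace (Z.of_nat (4 * n + 5) - Z.of_nat 4 * Z.of_nat i)%Z with (4 * Z.of_nat (n - i) + 5)%Z by lia.
  rewrite rep35_tri_4d5. lia.
Qed.

(** * Generating functions *)

Lemma pow_le_pow_decr s m n : 0 <= s <= 1 -> (m <= n)%nat -> s ^ n <= s ^ m.
Proof.
  intros hs hmn. replace n with (m + (n - m))%nat by lia. rewrite pow_add.
  rewrite <- (Rmult_1_r (s ^ m)) at 2. apply Rmult_le_compat_l; [apply pow_le; lra|].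
  rewrite <- (pow1 (n - m)). apply pow_incr. lra.
Qed.

Lemma INR_fiber_count g n :
  INR (fiber_count g n) = sum_f_R0 (fun k => if (g k =? n)%nat then 1 else 0) n.
Proof.
  unfold fiber_count. generalize n at 1 3. intros i.
  induction n as [|n IH].
  - simpl. destruct (g 0%nat =? i)%nat; simpl; lra.
  - rewrite seq_S, filter_app, length_app, plus_INR, IH, tech5. simpl.
    destruct (g (S n) =? i)%nat; simpl; lra.
Qed.

Lemma sum_fiber_count (g : nat -> nat) (w : nat -> R) N :
  (forall k, k <= g k)%nat ->
  sum_f_R0 (fun n => INR (fiber_count g n) * w n) N =
  sum_f_R0 (fun k => if (g k <=? N)%nat then w (g k) else 0) N.
Proof.
  intros hg. induction N as [|N IH].
  - simpl. rewrite INR_fiber_count. simpl.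
    destruct (Nat.eqb_spec (g 0%nat) 0), (Nat.leb_spec (g 0%nat) 0); try lia.
    + rewrite e. ring.
    + ring.
  - rewrite !tech5, IH, INR_fiber_count, tech5.
    rewrite (sum_eq (fun k => if (g k <=? S N)%nat then w (g k) else 0)
      (fun k => (if (g k <=? N)%nat then w (g k) else 0) +
                (if (g k =? S N)%nat then 1 else 0) * w (S N))).
    2:{ intros k _. destruct (Nat.leb_spec (g k) (S N)), (Nat.leb_spec (g k) N),
          (Nat.eqb_spec (g k) (S N)); try lia; try rewrite e; ring. }
    rewrite sum_plus, <- scal_sum. specialize (hg (S N)).
    destruct (Nat.leb_spec (g (S N)) (S N)), (Nat.eqb_spec (g (S N)) (S N)); try lia.
    + rewrite e. ring.
    + ring.
Qed.

(* The terms [w (g k)] with [k <= N < g k] are missing from the [N]-th partial sum; since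
   [2 g k >= k + N + 1] they are bounded by [s ^ k * s ^ (N + 1)]. *)
Lemma sum_fiber_count_error (g : nat -> nat) (w : nat -> R) s N :
  (forall k, k <= g k)%nat -> 0 <= s < 1 -> (forall m, Rabs (w m) <= s ^ (2 * m)) ->
  Rabs (sum_f_R0 (fun k => w (g k)) N - sum_f_R0 (fun n => INR (fiber_count g n) * w n) N)
  <= s / (1 - s) * s ^ N.
Proof.
  intros hg hs hw. rewrite sum_fiber_count, <- minus_sum by exact hg.
  eapply Rle_trans; [apply Rsum_abs|].
  apply Rle_trans with (sum_f_R0 (fun k => s ^ k * s ^ S N) N).
  { apply sum_Rle. intros k hk. destruct (Nat.leb_spec (g k) N).
    - rewrite Rminus_diag, Rabs_R0. apply Rmult_le_pos; apply pow_le; lra.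
    - rewrite Rminus_0_r. eapply Rle_trans; [apply hw|].
      rewrite <- pow_add. apply pow_le_pow_decr; [lra|]. specialize (hg k). lia. }
  rewrite <- scal_sum, tech3 by lra. simpl pow.
  assert (0 <= s * s ^ N) by (apply Rmult_le_pos; [lra | apply pow_le; lra]).
  assert (0 < / (1 - s)) by (apply Rinv_0_lt_compat; lra).
  assert (0 <= s * s ^ N * (s * s ^ N) * / (1 - s)) by (apply Rmult_le_pos; nra).
  unfold Rdiv. lra.
Qed.

Lemma is_series_fiber_count (g : nat -> nat) (w : nat -> R) s :
  (forall k, k <= g k)%nat -> 0 <= s < 1 -> (forall m, Rabs (w m) <= s ^ (2 * m)) ->
  is_series (fun n => INR (fiber_count g n) * w n) (Series (fun k => w (g k))).
Proof.
  intros hg hs hw.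
  assert (hex : ex_series (fun k => w (g k))).
  { apply ex_series_Rabs, (@ex_series_le R_AbsRing R_CompleteNormedModule _ (fun k => (s ^ 2) ^ k)).
    - intros k. change (norm (Rabs (w (g k)))) with (Rabs (Rabs (w (g k)))).
      rewrite Rabs_Rabsolu, <- pow_mult. eapply Rle_trans; [apply hw|].
      apply pow_le_pow_decr; [lra|]. specialize (hg k). lia.
    - apply ex_series_geom. rewrite Rabs_right; [|apply Rle_ge, pow_le; lra]. simpl. nra. }
  set (D := fun N => sum_n (fun k => w (g k)) N - sum_n (fun n => INR (fiber_count g n) * w n) N).
  assert (hgeom : is_lim_seq (fun N => s / (1 - s) * s ^ N) 0).
  { replace (Finite 0) with (Rbar_mult (s / (1 - s)) 0) by (simpl; f_equal; ring).
    apply is_lim_seq_scal_l, is_lim_seq_geom. rewrite Rabs_right; lra. }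
  assert (hD : is_lim_seq D 0).
  { apply is_lim_seq_le_le with (u := fun N => - (s / (1 - s) * s ^ N))
                                (w := fun N => s / (1 - s) * s ^ N); [| |exact hgeom].
    - intros N. unfold D. rewrite !sum_n_Reals.
      apply Rabs_le_between, sum_fiber_count_error; assumption.
    - replace (Finite 0) with (Rbar_opp 0) by (simpl; f_equal; ring).
      exact (proj1 (is_lim_seq_opp _ _) hgeom). }
  enough (h : is_lim_seq (sum_n (fun n => INR (fiber_count g n) * w n)) (Series (fun k => w (g k))))
    by exact h.
  apply (is_lim_seq_ext (fun N => sum_n (fun k => w (g k)) N - D N)); [intros N; unfold D; ring|].
  replace (Finite (Series (fun k => w (g k)))) with (Rbar_minus (Series (fun k => w (g k))) 0)
    by (simpl; f_equal; ring).
  apply is_lim_seq_minus'; [apply Series_correct, hex | exact hD].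
Qed.

Notation is_Cseries := (@is_series C_AbsRing C_NormedModule).

Lemma sum_n_fst (a : nat -> C) N : fst (sum_n a N) = sum_n (fun n => fst (a n)) N.
Proof. induction N as [|N IH]; rewrite ?sum_O, ?sum_Sn; simpl; [reflexivity | now rewrite <- IH]. Qed.

Lemma sum_n_snd (a : nat -> C) N : snd (sum_n a N) = sum_n (fun n => snd (a n)) N.
Proof. induction N as [|N IH]; rewrite ?sum_O, ?sum_Sn; simpl; [reflexivity | now rewrite <- IH]. Qed.

Lemma is_Cseries_iff (a : nat -> C) (l : C) :
  is_Cseries a l <->
  is_series (fun n => fst (a n)) (fst l) /\ is_series (fun n => snd (a n)) (snd l).
Proof.
  unfold is_series. split.
  - intros h. split; apply filterlim_locally; intros eps;
      generalize (proj1 (filterlim_locally _ _) h eps); apply filter_imp; intros N [h1 h2].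
    + rewrite <- sum_n_fst. exact h1.
    + rewrite <- sum_n_snd. exact h2.
  - intros [h1 h2]. apply filterlim_locally. intros eps.
    generalize (filter_and _ _ (proj1 (filterlim_locally _ _) h1 eps)
                               (proj1 (filterlim_locally _ _) h2 eps)).
    apply filter_imp. intros N [b1 b2].
    change (ball (fst l) eps (fst (sum_n a N)) /\ ball (snd l) eps (snd (sum_n a N))).
    rewrite sum_n_fst, sum_n_snd. split; assumption.
Qed.

Lemma is_Cseries_ext (a b : nat -> C) (l : C) :
  (forall n, a n = b n) -> is_Cseries a l -> is_Cseries b l.
Proof. apply is_series_ext. Qed.

Lemma is_Cseries_plus (a b : nat -> C) (A B : C) :
  is_Cseries a A -> is_Cseries b B -> is_Cseries (fun n => a n + b n)%C (A + B)%C.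
Proof. intros ha hb. exact (is_series_plus _ _ _ _ ha hb). Qed.

Lemma is_Cseries_scal_l (c : C) (a : nat -> C) (A : C) :
  is_Cseries a A -> is_Cseries (fun n => c * a n)%C (c * A)%C.
Proof. intros ha. exact (is_series_scal_l c _ _ ha). Qed.

Lemma fst_le_Cmod (z : C) : Rabs (fst z) <= Cmod z.
Proof. eapply Rle_trans; [apply Rmax_l | apply Rmax_Cmod]. Qed.

Lemma snd_le_Cmod (z : C) : Rabs (snd z) <= Cmod z.
Proof. eapply Rle_trans; [apply Rmax_r | apply Rmax_Cmod]. Qed.

Lemma ex_series_Rabs_le (f g : nat -> R) :
  (forall n, Rabs (f n) <= g n) -> ex_series g -> ex_series (fun n => Rabs (f n)).
Proof.
  intros h hg. refine (@ex_series_le R_AbsRing R_CompleteNormedModule _ _ _ hg).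
  intros n. change (Rabs (Rabs (f n)) <= g n). rewrite Rabs_Rabsolu. apply h.
Qed.

Lemma is_Cseries_mult (x y : nat -> C) (X Y : C) :
  is_Cseries x X -> is_Cseries y Y ->
  ex_series (fun n => Cmod (x n)) -> ex_series (fun n => Cmod (y n)) ->
  is_Cseries (fun n => sum_n (fun k => x k * y (n - k)%nat)%C n) (X * Y)%C.
Proof.
  intros hx hy ax ay.
  apply is_Cseries_iff in hx as [hx1 hx2], hy as [hy1 hy2].
  assert (ax1 := ex_series_Rabs_le _ _ (fun n => fst_le_Cmod (x n)) ax).
  assert (ax2 := ex_series_Rabs_le _ _ (fun n => snd_le_Cmod (x n)) ax).
  assert (ay1 := ex_series_Rabs_le _ _ (fun n => fst_le_Cmod (y n)) ay).
  assert (ay2 := ex_series_Rabs_le _ _ (fun n => snd_le_Cmod (y n)) ay).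
  apply is_Cseries_iff. split.
  - refine (is_series_ext _ _ _ _ (is_series_minus _ _ _ _
      (is_series_mult _ _ _ _ hx1 hy1 ax1 ay1) (is_series_mult _ _ _ _ hx2 hy2 ax2 ay2))).
    intros n. rewrite sum_n_fst, sum_n_Reals.
    exact (eq_sym (minus_sum (fun k => fst (x k) * fst (y (n - k)%nat))
                     (fun k => snd (x k) * snd (y (n - k)%nat)) n)).
  - refine (is_series_ext _ _ _ _ (is_series_plus _ _ _ _
      (is_series_mult _ _ _ _ hx1 hy2 ax1 ay2) (is_series_mult _ _ _ _ hx2 hy1 ax2 ay1))).
    intros n. rewrite sum_n_snd, sum_n_Reals.
    exact (eq_sym (sum_plus (fun k => fst (x k) * snd (y (n - k)%nat))
                    (fun k => snd (x k) * fst (y (n - k)%nat)) n)).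
Qed.

Lemma ex_series_Rplus (a b : nat -> R) :
  ex_series a -> ex_series b -> ex_series (fun n => a n + b n).
Proof. exact (ex_series_plus a b). Qed.

Lemma ex_series_Rscal_l (c : R) (a : nat -> R) : ex_series a -> ex_series (fun n => c * a n).
Proof. exact (ex_series_scal_l c a). Qed.

Lemma ex_series_Rext (a b : nat -> R) : (forall n, a n = b n) -> ex_series a -> ex_series b.
Proof. apply ex_series_ext. Qed.

Lemma is_Cseries_decr_1 (a : nat -> C) (l : C) :
  a O = 0%C -> is_Cseries (fun k => a (S k)) l -> is_Cseries a l.
Proof.
  intros h0 h. apply is_series_decr_1.
  match goal with |- is_series _ ?v => replace v with l; [exact h|] end.
  rewrite h0. change (l = l + - 0)%C. ring.
Qed.

(* Absolute convergence is part of the definition: it licenses the Cauchy products below. *)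
Definition is_genfun (a : nat -> nat) (q : C) (A : C) : Prop :=
  is_Cseries (fun n => RtoC (INR (a n)) * q ^ n)%C A /\
  ex_series (fun n => INR (a n) * Cmod q ^ n).

Lemma is_genfun_add a b q A B :
  is_genfun a q A -> is_genfun b q B -> is_genfun (fun n => a n + b n)%nat q (A + B)%C.
Proof.
  intros [ha ha'] [hb hb']. split.
  - refine (is_Cseries_ext _ _ _ _ (is_Cseries_plus _ _ _ _ ha hb)).
    intros n. rewrite plus_INR, RtoC_plus. ring.
  - refine (ex_series_Rext _ _ _ (ex_series_Rplus _ _ ha' hb')).
    intros n. rewrite plus_INR. ring.
Qed.

Lemma is_genfun_scal c a q A :
  is_genfun a q A -> is_genfun (fun n => c * a n)%nat q (RtoC (INR c) * A)%C.
Proof.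
  intros [ha ha']. split.
  - refine (is_Cseries_ext _ _ _ _ (is_Cseries_scal_l _ _ _ ha)).
    intros n. rewrite mult_INR, RtoC_mult. ring.
  - refine (ex_series_Rext _ _ _ (ex_series_Rscal_l (INR c) _ ha')).
    intros n. rewrite mult_INR. ring.
Qed.

Lemma is_genfun_shift a q A : is_genfun a q A -> is_genfun (coef_shift a) q (q * A)%C.
Proof.
  intros [ha ha']. split.
  - apply is_Cseries_decr_1; [simpl; ring|].
    refine (is_Cseries_ext _ _ _ _ (is_Cseries_scal_l q _ _ ha)).
    intros n. simpl. ring.
  - apply ex_series_incr_1.
    refine (ex_series_Rext _ _ _ (ex_series_Rscal_l (Cmod q) _ ha')).
    intros n. simpl. ring.
Qed.

Lemma INR_nsum (f : nat -> nat) n : INR (nsum f (S n)) = sum_f_R0 (fun i => INR (f i)) n.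
Proof.
  induction n as [|n IH]; [simpl; lra|].
  change (nsum f (S (S n))) with (nsum f (S n) + f (S n))%nat.
  rewrite plus_INR, IH. reflexivity.
Qed.

Lemma INR_conv a b n : INR (conv a b n) = sum_f_R0 (fun k => INR (a k) * INR (b (n - k)%nat)) n.
Proof. unfold conv. rewrite INR_nsum. apply sum_eq. intros. apply mult_INR. Qed.

Lemma RtoC_sum_f_R0 (f : nat -> R) n : RtoC (sum_f_R0 f n) = sum_n (fun k => RtoC (f k)) n.
Proof.
  induction n as [|n IH]; [rewrite sum_O; reflexivity|].
  rewrite sum_Sn, <- IH. simpl sum_f_R0. rewrite RtoC_plus. reflexivity.
Qed.

Lemma sum_n_ext_loc_C (a b : nat -> C) N :
  (forall n, (n <= N)%nat -> a n = b n) -> sum_n a N = sum_n b N.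
Proof. apply sum_n_ext_loc. Qed.

Lemma is_genfun_conv a b q A B :
  is_genfun a q A -> is_genfun b q B -> is_genfun (conv a b) q (A * B)%C.
Proof.
  intros [ha ha'] [hb hb'].
  assert (habs : forall c : nat -> nat, ex_series (fun n => INR (c n) * Cmod q ^ n) ->
            ex_series (fun n => Cmod (RtoC (INR (c n)) * q ^ n)%C)).
  { intros c hc. refine (ex_series_Rext _ _ _ hc). intros n.
    rewrite Cmod_mult, Cmod_R, Cmod_pow, Rabs_pos_eq by apply pos_INR. reflexivity. }
  split.
  - refine (is_Cseries_ext _ _ _ _ (is_Cseries_mult _ _ _ _ ha hb (habs a ha') (habs b hb'))).
    intros n. rewrite INR_conv, RtoC_sum_f_R0.
    rewrite <- (sum_n_mult_r (K := C_Ring) (q ^ n)%C).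
    apply sum_n_ext_loc_C. intros k hk.
    transitivity (RtoC (INR (a k)) * RtoC (INR (b (n - k)%nat)) * (q ^ k * q ^ (n - k)))%C;
      [ring|].
    rewrite <- Cpow_add_r, RtoC_mult. replace (k + (n - k))%nat with n by lia. reflexivity.
  - destruct ha' as [la hla], hb' as [lb hlb]. exists (la * lb).
    refine (is_series_ext _ _ _ _ (is_series_mult_pos _ _ _ _ hla hlb _ _)).
    + intros n. rewrite INR_conv, Rmult_comm, scal_sum. apply sum_eq. intros k hk.
      assert (Cmod q ^ n = Cmod q ^ k * Cmod q ^ (n - k)) as -> by (rewrite <- pow_add; f_equal; lia).
      ring.
    + intros n. apply Rmult_le_pos; [apply pos_INR | apply pow_le, Cmod_ge_0].
    + intros n. apply Rmult_le_pos; [apply pos_INR | apply pow_le, Cmod_ge_0].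
Qed.

Lemma fst_RtoC_mult (x : R) (z : C) : fst (RtoC x * z)%C = x * fst z.
Proof. simpl. ring. Qed.

Lemma snd_RtoC_mult (x : R) (z : C) : snd (RtoC x * z)%C = x * snd z.
Proof. simpl. ring. Qed.

(* [|q| = s^2] with [s < 1] supplies the geometric domination [|q^m| <= s^(2m)]. *)
Lemma is_genfun_fiber_count (g : nat -> nat) q :
  (forall k, k <= g k)%nat -> Cmod q < 1 ->
  is_genfun (fiber_count g) q (Csum (fun k => q ^ g k)%C).
Proof.
  intros hg hq. pose proof (Cmod_ge_0 q) as hq0.
  set (s := sqrt (Cmod q)).
  assert (hs : 0 <= s < 1).
  { split; [apply sqrt_pos|]. rewrite <- sqrt_1. apply sqrt_lt_1_alt. lra. }
  assert (hpow : forall m, Cmod q ^ m = s ^ (2 * m)).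
  { intros m. unfold s. rewrite pow_mult, pow2_sqrt by exact hq0. reflexivity. }
  split.
  - apply is_Cseries_iff. split.
    + refine (is_series_ext _ _ _ _ (is_series_fiber_count g (fun m => fst (q ^ m)%C) s hg hs _)).
      * intros n. symmetry. apply fst_RtoC_mult.
      * intros m. rewrite <- hpow, <- Cmod_pow. apply fst_le_Cmod.
    + refine (is_series_ext _ _ _ _ (is_series_fiber_count g (fun m => snd (q ^ m)%C) s hg hs _)).
      * intros n. symmetry. apply snd_RtoC_mult.
      * intros m. rewrite <- hpow, <- Cmod_pow. apply snd_le_Cmod.
  - eexists. apply (is_series_fiber_count g (fun m => Cmod q ^ m) s hg hs).
    intros m. rewrite <- hpow, Rabs_right; [lra | apply Rle_ge, pow_le, hq0].
Qed.

Lemma Csum_ext (a b : nat -> C) : (forall n, a n = b n) -> Csum a = Csum b.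
Proof. intros h. unfold Csum. f_equal; apply Series_ext; intros n; rewrite h; reflexivity. Qed.

Lemma psi_genfun e q : (1 <= e)%nat -> Cmod q < 1 -> is_genfun (psi_coef e) q (psi (q ^ e)%C).
Proof.
  intros he hq. unfold psi.
  rewrite (Csum_ext _ (fun k => q ^ (e * (k * (k + 1) / 2)))%C)
    by (intros; rewrite <- Cpow_mult_r; reflexivity).
  apply is_genfun_fiber_count; [|exact hq].
  intros k. assert (k <= k * (k + 1) / 2)%nat by (apply Nat.div_le_lower_bound; nia). nia.
Qed.

Lemma phi_genfun e q : (1 <= e)%nat -> Cmod q < 1 -> is_genfun (phi_coef e) q (phi (q ^ e)%C).
Proof.
  intros he hq. unfold phi.
  rewrite (Csum_ext (fun n => (q ^ e) ^ (n * n))%C (fun k => q ^ (e * (k * k)))%C),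
    (Csum_ext (fun m => (q ^ e) ^ ((m + 1) * (m + 1)))%C (fun k => q ^ (e * ((k + 1) * (k + 1))))%C)
    by (intros; rewrite <- Cpow_mult_r; reflexivity).
  apply is_genfun_add; apply is_genfun_fiber_count; auto; intros k; nia.
Qed.

Theorem lemma6p3 (b : nat) (hb : (1 <= b)%nat) :
  (forall n : nat, (1 <= n)%nat -> t 3 5 (4 * b) (4 * n + 3) = t 3 5 b n) /\
  (forall q : C, (Cmod q < 1)%R ->
     @is_series C_AbsRing C_NormedModule
       (fun n : nat => (RtoC (INR (t 3 5 (4 * b) (4 * n + 5))) * q ^ n)%C)
       (8 * psi (q ^ b) *
          (phi (q ^ 10) * psi (q ^ 12) + q * phi (q ^ 6) * psi (q ^ 20)))%C).
Proof.
  split.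
  - intros n _. exact (t_4n3_eq b n hb).
  - intros q hq.
    assert (hrhs := is_genfun_scal 8 _ _ _ (is_genfun_conv _ _ _ _ _ (psi_genfun b q hb hq)
      (is_genfun_add _ _ _ _ _
         (is_genfun_conv _ _ _ _ _ (phi_genfun 10 q ltac:(lia) hq) (psi_genfun 12 q ltac:(lia) hq))
         (is_genfun_shift _ _ _
            (is_genfun_conv _ _ _ _ _ (phi_genfun 6 q ltac:(lia) hq) (psi_genfun 20 q ltac:(lia) hq)))))).
    destruct hrhs as [hrhs _].
    replace (8 * psi (q ^ b) * (phi (q ^ 10) * psi (q ^ 12) + q * phi (q ^ 6) * psi (q ^ 20)))%C
      with (RtoC (INR 8) * (psi (q ^ b) *
              (phi (q ^ 10) * psi (q ^ 12) + q * (phi (q ^ 6) * psi (q ^ 20)))))%C.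
    + refine (is_Cseries_ext _ _ _ _ hrhs). intros n. rewrite t_4n5_eq_conv by exact hb. reflexivity.
    + replace (INR 8) with 8 by (simpl; ring). ring.
Qed.
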